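(* For integers $1<k<n$, $f_n(\{k,k+1,\dots,n-1\})=2^{n-1}$.
   Context: For $m\ge1$ and a set $B$ of positive integers, $f_m(B)$ denotes the number of linear orders $q$ on $[m]$ such that for every triple $i<j<k$ in $[m]$: if $j\in B$ then $i$ is not ranked last among $\{i,j,k\}$ in $q$, and if $j\notin B$ then $k$ is not ranked first among $\{i,j,k\}$ in $q$. *)

From mathcomp Require Import all_boot all_order all_fingroup.
Set Implicit Arguments. Unset Strict Implicit. Unset Printing Implicit Defensive.

(* A linear order q on [m] = {1,...,m} is encoded by a permutation
   q : {perm 'I_m}; the element x+1 of [m] (ordinal x) has rank q x,
   with smaller rank = earlier. *)

Definition ranked_last m (q : {perm 'I_m}) (x y z : 'I_m) : bool :=
  (q y < q x) && (q z < q x).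
Definition ranked_first m (q : {perm 'I_m}) (x y z : 'I_m) : bool :=
  (q x < q y) && (q x < q z).

(* B : a set of positive integers, as a predicate on nat.
   Ordinal i : 'I_m stands for the integer i+1 of [m]. *)
Definition good m (B : pred nat) (q : {perm 'I_m}) : bool :=
  [forall i : 'I_m, forall j : 'I_m, forall k : 'I_m,
    ((i < j) && (j < k)) ==>
    (if B (j.+1) then ~~ ranked_last q i j k
     else ~~ ranked_first q k i j)].

Definition f (m : nat) (B : pred nat) : nat := #|[pred q : {perm 'I_m} | good B q]|.

From mathcomp Require Import all_boot all_order all_fingroup zify.
Set Implicit Arguments. Unset Strict Implicit. Unset Printing Implicit Defensive.

(* Only the values 2..m-1 of B matter, and for B = {x | k <= x} the count is
   2^(m-1) for every k.  If m-1 is in B, the element ranked last in a valid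
   order must sit in one of the last two positions, and deleting it gives a
   valid order on [m-1]: a 2-to-1 correspondence.  Otherwise no middle value
   is in B; reversing both positions and ranks swaps the two kinds of
   constraints, so the count equals the one for B = all of [2, m-1]. *)

Definition triple_ok m (B : pred nat) (q : {perm 'I_m}) (a b c : 'I_m) : bool :=
  if B b.+1 then ~~ ranked_last q a b c else ~~ ranked_first q c a b.

Lemma goodP m B (q : {perm 'I_m}) :
  reflect (forall a b c : 'I_m, a < b -> b < c -> triple_ok B q a b c) (good B q).
Proof.
apply: (iffP forallP) => [Hq a b c ab bc | Hq a].
  by have /forallP/(_ b)/forallP/(_ c)/implyP := Hq a; apply; rewrite ab bc.
by apply/forallP => b; apply/forallP => c; apply/implyP => /andP[]; apply: Hq.
Qed.

Lemma eq_good m (B1 B2 : pred nat) (q : {perm 'I_m}) :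
  (forall x, 1 < x < m -> B1 x = B2 x) -> good B1 q = good B2 q.
Proof.
move=> eqB; apply/goodP/goodP => Hq a b c ab bc; have := Hq a b c ab bc;
  by rewrite /triple_ok eqB //; have := ltn_ord c; lia.
Qed.

Lemma eq_f m (B1 B2 : pred nat) :
  (forall x, 1 < x < m -> B1 x = B2 x) -> f m B1 = f m B2.
Proof. by move=> eqB; apply: eq_card => q; rewrite !inE (eq_good q eqB). Qed.

Lemma f_le2 m B : m <= 2 -> f m B = m`!.
Proof.
move=> le_m2; rewrite -card_Sn; apply: eq_card => q; rewrite !inE.
by apply/goodP => a b c ab bc; have := ltn_ord c; lia.
Qed.

Lemma ltn_rev_ord m (a b : 'I_m) : (rev_ord a < rev_ord b) = (b < a).
Proof. by rewrite /=; have := ltn_ord a; have := ltn_ord b; lia. Qed.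

Definition rev_perm m (q : {perm 'I_m}) : {perm 'I_m} :=
  perm (inj_comp (@rev_ord_inj m) (inj_comp (@perm_inj _ q) (@rev_ord_inj m))).

Lemma rev_permE m (q : {perm 'I_m}) x : rev_perm q x = rev_ord (q (rev_ord x)).
Proof. by rewrite permE. Qed.

Lemma rev_permK m : involutive (@rev_perm m).
Proof. by move=> q; apply/permP => x; rewrite !rev_permE !rev_ordK. Qed.

Lemma triple_ok_rev_perm m B (q : {perm 'I_m}) a b c :
  triple_ok B (rev_perm q) (rev_ord c) (rev_ord b) (rev_ord a) =
  triple_ok (fun x => ~~ B (m.+1 - x)) q a b c.
Proof.
rewrite /triple_ok /ranked_last /ranked_first !rev_permE !rev_ordK !ltn_rev_ord.
have -> : (rev_ord b).+1 = m.+1 - b.+1 by rewrite /=; have := ltn_ord b; lia.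
by case: (B _); rewrite /= andbC.
Qed.

Lemma good_rev_perm m B (q : {perm 'I_m}) :
  good B (rev_perm q) = good (fun x => ~~ B (m.+1 - x)) q.
Proof.
apply/goodP/goodP => Hq a b c ab bc.
  by rewrite -triple_ok_rev_perm; apply: Hq; rewrite ltn_rev_ord.
rewrite -[a]rev_ordK -[b]rev_ordK -[c]rev_ordK triple_ok_rev_perm.
by apply: Hq; rewrite ltn_rev_ord.
Qed.

Lemma f_rev m B : f m B = f m (fun x => ~~ B (m.+1 - x)).
Proof.
have rev_perm_inj := can_inj (@rev_permK m).
rewrite /f -(card_image rev_perm_inj); apply: eq_card => q.
by rewrite -[q in LHS]rev_permK mem_image // !inE good_rev_perm.
Qed.

Lemma card_lift_perm n (i j : 'I_n.+1) (P : pred {perm 'I_n.+1}) :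
  #|[pred q : {perm 'I_n.+1} | (q i == j) && P q]| =
  #|[pred s : {perm 'I_n} | P (lift_perm i j s)]|.
Proof.
have lift_perm_inj : injective (@lift_perm n i j).
  move=> s t /permP eq_st; apply/permP => x; apply: (@lift_inj _ j).
  by have := eq_st (lift i x); rewrite !lift_perm_lift.
rewrite -(card_image lift_perm_inj); apply: eq_card => q; rewrite !inE.
apply/andP/imageP => [[/eqP qi Pq] | [s Ps ->]]; last first.
  by rewrite lift_perm_id eqxx; split; rewrite // -topredE.
pose s x := odflt x (unlift (q i) (q (lift i x))).
have sK x : lift (q i) (s x) = q (lift i x).
  rewrite /s; have:= neq_lift i x.
  by rewrite -(can_eq (permK q)) => /unlift_some[] ? ? ->.
have s_inj : injective s.
  move=> x y eq_xy; apply: (@lift_inj _ i); apply: (@perm_inj _ q).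
  by rewrite -!sK eq_xy.
have def_q : q = lift_perm i j (perm s_inj).
  apply/permP => x; case: (unliftP i x) => [x'|] ->; last by rewrite lift_perm_id.
  by rewrite lift_perm_lift permE -qi sK.
by exists (perm s_inj); rewrite // inE -def_q.
Qed.

Lemma ltn_lift m (i : 'I_m.+1) (a b : 'I_m) : (lift i a < lift i b) = (a < b).
Proof. by rewrite !ltnNge leq_bump2. Qed.

Section LiftPerm.

Variables (n : nat) (B : pred nat) (i j : 'I_n.+2) (s : {perm 'I_n.+1}).
Hypothesis lift_middle : forall b : 'I_n.+1, b < n -> B (lift i b).+1 = B b.+1.

Lemma triple_ok_lift_perm (a b c : 'I_n.+1) : a < b -> b < c ->
  triple_ok B (lift_perm i j s) (lift i a) (lift i b) (lift i c) = triple_ok B s a b c.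
Proof.
move=> ab bc; rewrite /triple_ok /ranked_last /ranked_first !lift_perm_lift !ltn_lift.
by rewrite lift_middle //; have := ltn_ord c; lia.
Qed.

Lemma good_lift_perm_restrict : good B (lift_perm i j s) -> good B s.
Proof.
move=> /goodP Hq; apply/goodP => a b c ab bc.
by rewrite -triple_ok_lift_perm // Hq ?ltn_lift.
Qed.

Lemma good_lift_perm_extend :
  (forall a b c : 'I_n.+2, a < b -> b < c -> i \in [:: a; b; c] ->
     triple_ok B (lift_perm i j s) a b c) ->
  good B s -> good B (lift_perm i j s).
Proof.
move=> Hi /goodP Hs; apply/goodP => a b c ab bc.
case: (unliftP i a) => [a'|] Ea; last by apply: Hi; rewrite // !inE Ea eqxx ?orbT.
case: (unliftP i b) => [b'|] Eb; last by apply: Hi; rewrite // !inE Eb eqxx ?orbT.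
case: (unliftP i c) => [c'|] Ec; last by apply: Hi; rewrite // !inE Ec eqxx ?orbT.
move: ab bc; rewrite Ea Eb Ec !ltn_lift => ab bc.
by rewrite triple_ok_lift_perm // Hs.
Qed.

End LiftPerm.

Lemma ord_max_ltnF m (x : 'I_m.+1) : (@ord_max m < x) = false.
Proof. by rewrite ltnNge leq_ord. Qed.

Lemma ltn_perm_ord_max m (q : {perm 'I_m.+1}) i x :
  q i = ord_max -> x != i -> q x < q i.
Proof.
move=> qi xi; rewrite qi ltn_neqAle leq_ord andbT val_eqE -qi.
by rewrite (inj_eq perm_inj).
Qed.

Lemma ord_last_two n (i : 'I_n.+2) : n <= i -> (i == inord n) || (i == ord_max).
Proof. by rewrite -!val_eqE /= inordK //; have := ltn_ord i; lia. Qed.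

Section LastRanked.

Variables (n : nat) (B : pred nat).
Hypothesis B_last_middle : B n.+1.

Lemma good_last_ranked_pos (q : {perm 'I_n.+2}) i : q i = ord_max -> good B q -> n <= i.
Proof.
move=> qi /goodP Hq; rewrite leqNgt; apply/negP => lt_in.
have i_n : i < (inord n : 'I_n.+2) by rewrite inordK.
have n_max : (inord n : 'I_n.+2) < @ord_max n.+1 by rewrite inordK.
have := Hq i (inord n) ord_max i_n n_max.
rewrite /triple_ok inordK // B_last_middle /ranked_last !(ltn_perm_ord_max qi) //.
  by apply: contraTneq (ltn_trans i_n n_max) => ->; rewrite ltnn.
by apply: contraTneq i_n => ->; rewrite ltnn.
Qed.

Lemma good_lift_perm_last (i : 'I_n.+2) (s : {perm 'I_n.+1}) :
  n <= i -> good B (lift_perm i ord_max s) = good B s.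
Proof.
move=> ni.
have lift_middle (b : 'I_n.+1) : b < n -> B (lift i b).+1 = B b.+1.
  by move=> bn; rewrite /= /bump leqNgt (leq_trans bn ni).
apply/idP/idP; first exact: good_lift_perm_restrict.
apply: good_lift_perm_extend => // a b c ab bc; rewrite !inE.
rewrite /triple_ok /ranked_last /ranked_first.
case/or3P=> /eqP eq_i; rewrite -eq_i lift_perm_id in ab bc *; have c_lt := ltn_ord c.
- by lia.
- have -> : i.+1 = n.+1 by lia.
  by rewrite B_last_middle ord_max_ltnF.
- by case: ifP; rewrite ord_max_ltnF ?andbF.
Qed.

Lemma f_rec : f n.+2 B = 2 * f n.+1 B.
Proof.
have card_last_ranked_at (i : 'I_n.+2) : n <= i ->
    #|[pred q : {perm 'I_n.+2} | (q i == ord_max) && good B q]| = f n.+1 B.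
  move=> ni; rewrite card_lift_perm; apply: eq_card => s.
  by rewrite !inE good_lift_perm_last.
rewrite mul2n -addnn {1}/f -(cardID [pred q : {perm 'I_n.+2} | q ord_max == ord_max]).
congr (_ + _).
  by rewrite -(card_last_ranked_at ord_max) //; apply: eq_card => q; rewrite !inE andbC.
rewrite -(card_last_ranked_at (inord n)) ?inordK //; apply: eq_card => q; rewrite !inE.
apply/andP/andP => [[q_max good_q] | [/eqP q_n good_q]]; split => //.
  set i := (q^-1)%g ord_max; have qi : q i = ord_max by rewrite permKV.
  have /orP[/eqP <- | /eqP i_max] := ord_last_two (good_last_ranked_pos qi good_q).
    by rewrite qi.
  by rewrite i_max in qi; rewrite qi eqxx in q_max.
by rewrite -[X in _ != X]q_n (inj_eq perm_inj) -val_eqE /= inordK //; lia.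
Qed.

End LastRanked.

Lemma f_leq m k : f m.+1 (leq k) = 2 ^ m.
Proof.
elim: m k => [|n IHn] k; first exact: f_le2.
have [k_le | k_gt] := leqP k n.+1; first by rewrite f_rec // IHn expnS.
rewrite f_rev (@eq_f _ _ (leq 0)) => [|x /andP[x_gt1 x_lt]]; last first.
  by rewrite leq0n; apply/negP; lia.
by rewrite f_rec // IHn expnS.
Qed.

Theorem proposition8 (n k : nat) (h1 : 1 < k) (h2 : k < n) :
  f n (fun x => (k <= x) && (x <= n - 1)) = 2 ^ (n - 1).
Proof.
rewrite (@eq_f _ _ (leq k)) => [|x /andP[_ x_lt]]; last first.
  by rewrite (_ : x <= n - 1) ?andbT //; lia.
by case: n h2 => // n _; rewrite f_leq subn1.
Qed.
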